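(* Let $n$ be a prime and $k$ an integer with $2\le k<n/2$. Let $\underline{g}=[g_1,\dots,g_k]\in\underline{\mathbf{G}}_{\mathrm{tot}}$. For $p=0,1,\dots,n-1$ put $v_p=1+p\,g_1 \pmod n$ and let $\mathcal{E}_p$ be the set of entries of the vector $\underline{r}_{\underline{g}}+p\,g_1\cdot\underline{1}\pmod n$. Then $(v_0,\mathcal{E}_0,v_1,\mathcal{E}_1,\dots,v_{n-1},\mathcal{E}_{n-1},v_0)$ is a Hamiltonian (Berge) cycle of the complete $k$-uniform hypergraph $K_n^k$ on vertex set $[n]$: the vertices $v_0,\dots,v_{n-1}$ are exactly the elements of $[n]$, each listed once; the $\mathcal{E}_p$ are $n$ pairwise distinct $k$-subsets of $[n]$; and $\{v_p,v_{p+1}\}\subseteq\mathcal{E}_p$ for every $p$ (indices mod $n$). Moreover $\{\mathcal{E}_0,\dots,\mathcal{E}_{n-1}\}$ is exactly the set of underlying sets of the elements of $\underline{\mathbf{C}}_{\underline{g}}$.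
   Context: $[n]=\{1,\dots,n\}$; reduction mod $n$ is entrywise with representatives in $[n]$, and $\underline{1}$ is the all-ones vector of length $k$. For an integer vector $\underline{g}=[g_1,\dots,g_k]$ with $g_i\ge1$ for $i\in[k-1]$ and $g_1+\dots+g_{k-1}\le n-1$, the representative vector is $\underline{r}_{\underline{g}}=[1,1+g_1,1+g_1+g_2,\dots,1+g_1+\cdots+g_{k-1}]$ and $\underline{\mathbf{C}}_{\underline{g}}=\{\underline{r}_{\underline{g}}+p\cdot\underline{1}\ (\mathrm{mod}\ n):p=0,\dots,n-1\}$. The generator set: let $\sigma_{\min}=k-1$ and $\sigma_{\max}=n-\lceil n/k\rceil$. For $\sigma\in[\sigma_{\min},\sigma_{\max}]$ let $\underline{\mathbf{S}}_\sigma=\{[c_1,\dots,c_{k-1}]\in\mathbb{Z}^{k-1}:\sum_i c_i=\sigma,\ 1\le c_i\le n-\sigma\}$ and $\underline{\mathbf{G}}_\sigma=\{[c_1,\dots,c_{k-1},m]:[c_1,\dots,c_{k-1}]\in\underline{\mathbf{S}}_\sigma\}$ where $m=-\sigma$ if $\sigma\le\lfloor n/2\rfloor$ and $m=n-\sigma$ otherwise. Finally $\underline{\mathbf{G}}_{\mathrm{tot}}=\bigcup_{\sigma=\sigma_{\min}}^{\sigma_{\max}}\underline{\mathbf{G}}_\sigma$. The complete $k$-uniform hypergraph $K_n^k$ has vertex set $[n]$ and every $k$-subset of $[n]$ as a hyperedge. A (Berge) Hamiltonian cycle is a sequence $(v_1,\mathcal{E}_1,v_2,\dots,v_n,\mathcal{E}_n,v_1)$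 with $v_1,\dots,v_n$ a permutation of $[n]$, $\mathcal{E}_1,\dots,\mathcal{E}_n$ distinct hyperedges, and $v_i,v_{i+1}\in\mathcal{E}_i$ (indices mod $n$). *)

From mathcomp Require Import all_boot all_order all_algebra.
From mathcomp Require Export finmap.
Set Implicit Arguments. Unset Strict Implicit. Unset Printing Implicit Defensive.
Import Order.TTheory GRing.Theory Num.Theory.
Local Open Scope fset_scope.
Local Open Scope ring_scope.

(* reduction mod n with representative in [n] = {1,...,n} (for n > 0) *)
Definition redn (n : nat) (z : int) : nat :=
  let r := absz (z %% n%:Z)%Z in if r == 0%N then n else r.

Definition sigma_min (k : nat) : nat := (k - 1)%N.
Definition ceil_div (n k : nat) : nat := ((n + k - 1) %/ k)%N.
Definition sigma_max (n k : nat) : nat := (n - ceil_div n k)%N.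

Definition in_S (n k sigma : nat) (c : seq int) : Prop :=
  size c = (k - 1)%N /\ \sum_(x <- c) x = sigma%:Z /\
  all (fun x => (1 <= x) && (x <= n%:Z - sigma%:Z)) c.

Definition m_of (n sigma : nat) : int :=
  if (sigma <= n./2)%N then - sigma%:Z else n%:Z - sigma%:Z.

Definition in_G (n k sigma : nat) (g : seq int) : Prop :=
  exists2 c, in_S n k sigma c & g = rcons c (m_of n sigma).

Definition in_Gtot (n k : nat) (g : seq int) : Prop :=
  exists sigma, (sigma_min k <= sigma <= sigma_max n k)%N /\ in_G n k sigma g.

(* representative vector r_g = [1, 1+g_1, ..., 1+g_1+...+g_{k-1}]
   (g`_j is the paper's g_{j+1}) *)
Definition rep_vec (k : nat) (g : seq int) : seq int :=
  mkseq (fun i => 1 + \sum_(j < i) g`_j) k.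

Definition C_g (n k : nat) (g : seq int) : seq (seq nat) :=
  mkseq (fun p => map (fun x => redn n (x + p%:Z)) (rep_vec k g)) n.

Definition fset_of (s : seq nat) : {fset nat} := [fset x | x in s].

Definition berge_ham_cycle_Knk (n k : nat) (v : nat -> nat)
    (E : nat -> {fset nat}) : Prop :=
  perm_eq (mkseq v n) (iota 1 n) /\
  (forall p, (p < n)%N -> (E p `<=` fset_of (iota 1 n)) && (#|` E p| == k)) /\
  (forall p q, (p < n)%N -> (q < n)%N -> E p = E q -> p = q) /\
  (forall p, (p < n)%N -> (v p \in E p) && (v (p.+1 %% n)%N \in E p)).

From mathcomp Require Import all_boot all_order all_algebra finmap.
From mathcomp Require Import zify.

Set Implicit Arguments.
Unset Strict Implicit.
Unset Printing Implicit Defensive.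

(* The first k-1 entries c_1, ..., c_(k-1) of g are positive with sum sigma < n, so the
   partial sums 0 = s_0 < s_1 < ... < s_(k-1) < n are distinct mod n and r_g = (1 + s_i)_i
   is a k-subset of Z/n, as is each translate r_g + t.  The element sums of r_g + t and
   r_g + t' differ by k (t' - t), so equal translates force t = t' mod n.  As g_1 = c_1 is a unit mod n,
   p |-> 1 + p g_1 and p |-> r_g + p g_1 run over all vertices, resp. all translates, exactly
   once, and v_p = 1 + s_0 + p g_1 and v_(p+1) = 1 + s_1 + p g_1 both lie in E_p. *)

Definition psum (c : seq nat) (i : nat) : nat := \sum_(j < i) nth 0 c j.

Lemma psum0 c : psum c 0 = 0.
Proof. exact: big_ord0. Qed.

Lemma psumS c i : psum c i.+1 = psum c i + nth 0 c i.
Proof. by rewrite /psum big_ord_recr. Qed.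

Lemma leq_psum c i j : i <= j -> psum c i <= psum c j.
Proof.
elim: j => [|j IHj]; first by rewrite leqn0 => /eqP ->.
rewrite leq_eqVlt => /predU1P [-> // | /IHj le_ij].
by rewrite psumS (leq_trans le_ij) ?leq_addr.
Qed.

Lemma ltn_psum c i j : all (fun x => 0 < x) c -> i < j <= size c -> psum c i < psum c j.
Proof.
move=> c_pos /andP [lt_ij le_j]; have lt_j1 : j.-1 < size c by lia.
rewrite -(ltn_predK lt_ij) psumS -addn1 leq_add ?leq_psum //; first lia.
by apply: (allP c_pos); rewrite mem_nth.
Qed.

Lemma psum_inj_mod c n i j : all (fun x => 0 < x) c -> psum c (size c) < n ->
  i <= size c -> j <= size c -> psum c i = psum c j %[mod n] -> i = j.
Proof.
move=> c_pos c_lt i_le j_le; have psum_lt l : l <= size c -> psum c l < n.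
  by move=> l_le; apply: leq_ltn_trans c_lt; apply: leq_psum.
rewrite !modn_small ?psum_lt //.
case: (ltngtP i j) => // lt_ij; [|move/esym]; move/eqP.
  by rewrite ltn_eqF // ltn_psum ?lt_ij.
by rewrite ltn_eqF // ltn_psum ?lt_ij.
Qed.

Local Open Scope fset_scope.

Lemma fset_ofE (s : seq nat) x : (x \in fset_of s) = (x \in s).
Proof. by rewrite inE. Qed.

Lemma perm_fset_of (s : seq nat) : uniq s -> perm_eq (fset_of s) s.
Proof. by move=> s_uniq; apply: uniq_perm => // x; rewrite fset_ofE. Qed.

Lemma eqn_modMl_coprime d a b n :
  coprime n d -> (d * a == d * b %[mod n]) = (a == b %[mod n]).
Proof.
move=> co_nd; wlog le_ba : a b / b <= a => [hwlog|].
  by case: (leqP b a) => [/hwlog//|/ltnW/hwlog]; rewrite eq_sym => ->; rewrite eq_sym.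
by rewrite !eqn_mod_dvd ?leq_mul2l ?le_ba ?orbT // -mulnBr Gauss_dvdr.
Qed.

Lemma mul_mod_inj n c p q : coprime n c -> p < n -> q < n ->
  p * c = q * c %[mod n] -> p = q.
Proof.
move=> co_nc p_lt q_lt /eqP; rewrite ![_ * c]mulnC eqn_modMl_coprime //.
by rewrite !modn_small // => /eqP.
Qed.

Definition redn_nat (n x : nat) : nat := if x %% n == 0 then n else x %% n.

Lemma redn_natE n x : redn n x%:Z = redn_nat n x.
Proof. by rewrite /redn /redn_nat modz_nat. Qed.

Section ReductionToInterval.

Variable n : nat.
Hypothesis n_gt0 : 0 < n.

Lemma redn_nat_mod x : redn_nat n x %% n = x %% n.
Proof. by rewrite /redn_nat; case: eqP => [->|]; rewrite ?modnn ?modn_mod. Qed.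

Lemma redn_nat_in_iota x : redn_nat n x \in iota 1 n.
Proof. rewrite mem_iota /redn_nat; case: eqP; have := ltn_pmod x n_gt0; lia. Qed.

Lemma eq_redn_nat x y : (redn_nat n x == redn_nat n y) = (x == y %[mod n]).
Proof.
apply/eqP/eqP => [e|e]; first by rewrite -redn_nat_mod e redn_nat_mod.
by rewrite /redn_nat e.
Qed.

Lemma perm_redn_nat_mul a c : coprime n c ->
  perm_eq (mkseq (fun p => redn_nat n (a + p * c)) n) (iota 1 n).
Proof.
move=> co_nc; have v_uniq : uniq (mkseq (fun p => redn_nat n (a + p * c)) n).
  rewrite map_inj_in_uniq ?iota_uniq // => p q; rewrite !mem_iota /=.
  move=> p_lt q_lt /eqP; rewrite eq_redn_nat eqn_modDl => /eqP.
  by apply: mul_mod_inj; lia.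
apply: uniq_perm => //; first exact: iota_uniq.
apply: (uniq_min_size v_uniq _ _).2; last by rewrite size_mkseq size_iota.
by move=> _ /mapP [p _ ->]; apply: redn_nat_in_iota.
Qed.

Lemma mul_mod_onto c t : coprime n c -> exists2 q, q < n & q * c = t %[mod n].
Proof.
move=> co_nc; have := redn_nat_in_iota t.
rewrite -(perm_mem (perm_redn_nat_mul 0 co_nc)) => /mapP [q].
by rewrite mem_iota => /andP [_ q_lt] /eqP; rewrite eq_redn_nat => /eqP; exists q.
Qed.

End ReductionToInterval.

Section Translates.

Variables (n k : nat) (s : nat -> nat).
Hypothesis n_gt0 : 0 < n.
Hypothesis s_inj : forall i j, i < k -> j < k -> s i = s j %[mod n] -> i = j.

Definition translate_seq (t : nat) : seq nat :=
  mkseq (fun i => redn_nat n (1 + s i + t)) k.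

Definition translate (t : nat) : {fset nat} := fset_of (translate_seq t).

Lemma translate_mod t1 t2 : t1 = t2 %[mod n] -> translate t1 = translate t2.
Proof.
move=> e; congr fset_of; apply: eq_mkseq => i; apply/eqP.
by rewrite eq_redn_nat -modnDm e modnDm.
Qed.

Lemma translate_seq_uniq t : uniq (translate_seq t).
Proof.
rewrite map_inj_in_uniq ?iota_uniq // => i j; rewrite !mem_iota /=.
move=> i_lt j_lt /eqP; rewrite eq_redn_nat eqn_modDr eqn_modDl => /eqP.
by apply: s_inj; lia.
Qed.

Lemma card_translate t : #|` translate t| = k.
Proof. by rewrite (perm_size (perm_fset_of (translate_seq_uniq t))) size_mkseq. Qed.

Lemma translate_sub t : translate t `<=` fset_of (iota 1 n).
Proof.
apply/fsubsetP => x; rewrite !fset_ofE => /mapP [i _ ->].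
exact: redn_nat_in_iota.
Qed.

Lemma mem_translate i t : i < k -> redn_nat n (1 + s i + t) \in translate t.
Proof. by move=> i_lt; rewrite fset_ofE; apply: map_f; rewrite mem_iota. Qed.

Lemma sum_translate t :
  \sum_(x <- translate t) x = \sum_(i < k) (1 + s i) + k * t %[mod n].
Proof.
rewrite (perm_big _ (perm_fset_of (translate_seq_uniq t))) /= big_map -modn_summ.
rewrite (eq_bigr (fun i => (1 + s i + t) %% n)) => [|i _]; last exact: redn_nat_mod.
rewrite modn_summ big_split /= -{1 2}(subn0 k) -/(index_iota 0 k).
by rewrite sum_nat_const_nat subn0 big_mkord.
Qed.

Lemma translate_inj t1 t2 : coprime n k ->
  translate t1 = translate t2 -> t1 = t2 %[mod n].
Proof.
move=> co_nk e; apply/eqP; rewrite -(eqn_modMl_coprime _ _ co_nk).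
by rewrite -(eqn_modDl (\sum_(i < k) (1 + s i))) -!sum_translate e.
Qed.

Lemma translate_mul_ham_cycle c :
  1 < k -> coprime n k -> coprime n c -> s 0 = 0 -> s 1 = c ->
  berge_ham_cycle_Knk n k (fun p => redn_nat n (1 + p * c)) (fun p => translate (p * c)).
Proof.
move=> k_gt1 co_nk co_nc s0 s1; split; first exact: perm_redn_nat_mul.
split=> [p _|]; first by rewrite translate_sub card_translate eqxx.
split=> [p q p_lt q_lt /(translate_inj co_nk)|p p_lt]; first exact: mul_mod_inj.
apply/andP; split.
  by have := @mem_translate 0 (p * c); rewrite s0 addn0; apply; lia.
have -> : redn_nat n (1 + p.+1 %% n * c) = redn_nat n (1 + s 1 + p * c).
  by apply/eqP; rewrite eq_redn_nat -modnDmr modnMml modnDmr s1 mulSn addnA.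
by apply: mem_translate.
Qed.

Lemma imfset_translate_mul c : coprime n c ->
  [fset translate (p * c) | p in iota 0 n] = [fset translate t | t in iota 0 n].
Proof.
move=> co_nc; apply/fsetP => X; apply/imfsetP/imfsetP => -[p /=].
  move=> _ ->; exists (p * c %% n); last exact/translate_mod/esym/modn_mod.
  by rewrite mem_iota ltn_pmod.
rewrite mem_iota add0n => /andP [_ p_lt] ->.
have [q q_lt qc_p] := mul_mod_onto n_gt0 p co_nc.
by exists q; [rewrite mem_iota | exact: translate_mod].
Qed.

End Translates.

Lemma eq_berge_ham_cycle_Knk n k v v' E E' : v =1 v' -> E =1 E' ->
  berge_ham_cycle_Knk n k v E -> berge_ham_cycle_Knk n k v' E'.
Proof.
move=> ev eE [v_perm [E_sub [E_inj v_in_E]]]; split; first by rewrite -(eq_mkseq ev).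
split=> [p p_lt|]; first by rewrite -eE E_sub.
split=> [p q p_lt q_lt|p p_lt]; first by rewrite -!eE; apply: E_inj.
by rewrite -eE -!ev v_in_E.
Qed.

Lemma imfset_map (T U V : choiceType) (f : U -> V) (h : T -> U) (s : seq T) :
  [fset f y | y in map h s] = [fset f (h x) | x in s].
Proof.
apply/fsetP => z; apply/imfsetP/imfsetP => -[y /=].
  by move=> /mapP [x x_in ->] ->; exists x.
by move=> y_in ->; exists (h y); first exact: map_f.
Qed.

Import Order.TTheory GRing.Theory Num.Theory.
Local Open Scope ring_scope.

Lemma rep_vec_rcons (c : seq nat) (m : int) k : size c = k.-1 ->
  rep_vec k (rcons (map Posz c) m) = mkseq (fun i => (1 + psum c i)%:Z) k.
Proof.
move=> size_c; apply/eq_in_map => i; rewrite mem_iota add0n => /andP [_ lt_ik].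
rewrite PoszD /psum (big_morph Posz PoszD (erefl 0%:Z)); congr (_ + _).
apply: eq_bigr => j _; have lt_jc : (j < size c)%N by have := ltn_ord j; lia.
by rewrite nth_rcons size_map lt_jc (nth_map 0%N).
Qed.

Lemma in_Gtot_decomp n k g : (0 < n)%N -> (0 < k)%N -> in_Gtot n k g ->
  exists c m, [/\ size c = k.-1, all (fun x => 0 < x)%N c, (psum c (size c) < n)%N
                & g = rcons (map Posz c) m].
Proof.
move=> n_gt0 k_gt0 [sg [/andP [_ sg_le] [ci [size_ci [sum_ci ci_pos]] ->]]].
have ci_ge0 : all (fun x => 0 <= x) ci.
  by apply: sub_all ci_pos => x /andP [x_ge1 _]; apply: le_trans x_ge1.
exists (map absz ci), (m_of n sg); split.
- by rewrite size_map size_ci subn1.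
- rewrite all_map; apply: sub_all ci_pos => x /andP [x_ge1 _] /=.
  by rewrite -ltz_nat gtz0_abs.
- have -> : psum (map absz ci) (size (map absz ci)) = sg.
    apply/eqP; rewrite -eqz_nat -sum_ci (big_nth 0) big_mkord size_map /psum.
    rewrite (big_morph Posz PoszD (erefl 0%:Z)); apply/eqP/eq_bigr => j _.
    by rewrite (nth_map 0) // gez0_abs //; apply: (allP ci_ge0); rewrite mem_nth.
  move: sg_le; rewrite /sigma_max /ceil_div.
  have : (0 < (n + k - 1) %/ k)%N by rewrite divn_gt0; lia.
  lia.
- congr rcons; rewrite -map_comp -[LHS]map_id; apply/eq_in_map => x x_in /=.
  by rewrite gez0_abs //; apply: (allP ci_ge0).
Qed.

Theorem lemma1 (n k : nat) (g : seq int) :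
  prime n -> (2 <= k)%N -> (k.*2 < n)%N -> in_Gtot n k g ->
  let g1 := g`_0 in
  let v := fun p : nat => redn n (1 + p%:Z * g1) in
  let E := fun p : nat =>
    fset_of (map (fun x => redn n (x + p%:Z * g1)) (rep_vec k g)) in
  berge_ham_cycle_Knk n k v E /\
  [fset E p | p in iota 0 n] = [fset fset_of c | c in C_g n k g].
Proof.
move=> n_prime k_ge2 k2_lt_n.
have [n_gt0 k_lt_n] : (0 < n)%N /\ (k < n)%N by rewrite prime_gt0 //; split=> //; lia.
move=> /(in_Gtot_decomp n_gt0 (ltnW k_ge2)) [c [m [size_c c_pos c_lt ->]]] g1 v E.
have size_c_gt0 : (0 < size c)%N by lia.
have g1E : g1 = (psum c 1)%:Z.
  by rewrite /g1 nth_rcons size_map size_c_gt0 (nth_map 0%N) // /psum big_ord1.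
have c1_pos : (0 < psum c 1)%N.
  by have := ltn_psum (i := 0) (j := 1) c_pos; rewrite psum0 size_c_gt0; apply.
have co_nc1 : coprime n (psum c 1).
  rewrite prime_coprime // gtnNdvd //; exact: leq_ltn_trans (leq_psum c size_c_gt0) c_lt.
have co_nk : coprime n k by rewrite prime_coprime // gtnNdvd //; lia.
have s_inj i j : (i < k)%N -> (j < k)%N -> psum c i = psum c j %[mod n] -> i = j.
  by move=> i_lt j_lt; apply: psum_inj_mod; rewrite // size_c; lia.
have v_redn p : redn_nat n (1 + p * psum c 1) = v p.
  by rewrite /v g1E -PoszM -PoszD redn_natE.
have translateE t : translate n k (psum c) t =
    fset_of (map (fun x => redn n (x + t%:Z)) (rep_vec k (rcons (map Posz c) m))).
  rewrite rep_vec_rcons // -map_comp; congr fset_of.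
  by apply: eq_map => i /=; rewrite -PoszD redn_natE.
have E_translate p : translate n k (psum c) (p * psum c 1) = E p.
  by rewrite translateE /E g1E PoszM.
split.
  apply: eq_berge_ham_cycle_Knk v_redn E_translate _; apply: translate_mul_ham_cycle => //.
  exact: psum0.
rewrite -(eq_imfset _ E_translate (fun=> erefl)) imfset_translate_mul // /C_g imfset_map.
by apply: eq_imfset => // t; rewrite translateE.
Qed.
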